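(* For $n\ge2$ and all $P,Q\in\Gamma_n$, $D_{I\Delta}(P\|Q)\le \frac23 D_{h\Delta}(P\|Q)$.
   Context: $\Gamma_n=\{P=(p_1,\dots,p_n): p_i>0,\ \sum p_i=1\}$. $h(P\|Q)=\frac12\sum_{i=1}^n(\sqrt{p_i}-\sqrt{q_i})^2$; $\Delta(P\|Q)=\sum_{i=1}^n\frac{(p_i-q_i)^2}{p_i+q_i}$; $I(P\|Q)=\frac12\Big[\sum_{i=1}^n p_i\ln\frac{2p_i}{p_i+q_i}+\sum_{i=1}^n q_i\ln\frac{2q_i}{p_i+q_i}\Big]$. $D_{I\Delta}=I-\frac14\Delta$, $D_{h\Delta}=h-\frac14\Delta$. *)

(* classical reals R. Distributions are P : nat -> R, using
   the coordinates p_0, ..., p_{n-1}. *)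
From Stdlib Require Import Reals.
Open Scope R_scope.

Fixpoint rsum (n : nat) (f : nat -> R) : R :=
  match n with
  | O => 0
  | S m => rsum m f + f m
  end.

Definition Gamma (n : nat) (P : nat -> R) : Prop :=
  (forall i, (i < n)%nat -> 0 < P i) /\ rsum n P = 1.

Definition hdiv (n : nat) (P Q : nat -> R) : R :=
  / 2 * rsum n (fun i => (sqrt (P i) - sqrt (Q i)) ^ 2).

Definition Deltadiv (n : nat) (P Q : nat -> R) : R :=
  rsum n (fun i => (P i - Q i) ^ 2 / (P i + Q i)).

Definition Idiv (n : nat) (P Q : nat -> R) : R :=
  / 2 * (rsum n (fun i => P i * ln (2 * P i / (P i + Q i)))
       + rsum n (fun i => Q i * ln (2 * Q i / (P i + Q i)))).

Definition D_IDelta (n : nat) (P Q : nat -> R) : R :=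
  Idiv n P Q - / 4 * Deltadiv n P Q.

Definition D_hDelta (n : nat) (P Q : nat -> R) : R :=
  hdiv n P Q - / 4 * Deltadiv n P Q.

(* Both sides are sums of pointwise terms in (p_i, q_i), so it suffices to
   compare the terms.  Writing a = c (1 + u), b = c (1 - u) with c > 0 and
   -1 < u < 1, the difference between (2/3) times the h-Delta term and the
   I-Delta term is c * gap u for an even function gap of u alone.  Since
   gap 0 = gap' 0 = 0 and gap'' u = (1 - s)^2 (s + 2) / (3 s^3) >= 0 with
   s = sqrt (1 - u^2), gap is nonnegative on (-1, 1). *)
From Coquelicot Require Import Coquelicot.
From Stdlib Require Import Reals Lra Psatz Lia.
Open Scope R_scope.

Lemma rsum_le (n : nat) (f g : nat -> R) :
  (forall i, (i < n)%nat -> f i <= g i) -> rsum n f <= rsum n g.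
Proof.
induction n as [|n IH]; intros Hfg; simpl; [lra|].
assert (rsum n f <= rsum n g) by (apply IH; intros i Hi; apply Hfg; lia).
assert (f n <= g n) by (apply Hfg; lia).
lra.
Qed.

Lemma rsum_scal (n : nat) (k : R) (f : nat -> R) :
  rsum n (fun i => k * f i) = k * rsum n f.
Proof. induction n as [|n IH]; simpl; [ring | rewrite IH; ring]. Qed.

Lemma le_of_deriv_ge0 (f f' : R -> R) (a b : R) : a <= b ->
  (forall t, a <= t <= b -> is_derive f t (f' t)) ->
  (forall t, a <= t <= b -> 0 <= f' t) -> f a <= f b.
Proof.
intros Hab Hder Hpos.
destruct (Req_dec a b) as [<-|Hne]; [lra|].
destruct (MVT_cor2 f f' a b) as [c [Hc Hcab]]; [lra| |].
- intros t Ht. apply is_derive_Reals, Hder, Ht.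
- assert (0 <= f' c) by (apply Hpos; lra). nra.
Qed.

Definition term_IDelta (a b : R) : R :=
  / 2 * (a * ln (2 * a / (a + b)) + b * ln (2 * b / (a + b)))
  - / 4 * ((a - b) ^ 2 / (a + b)).

Definition term_hDelta (a b : R) : R :=
  / 2 * (sqrt a - sqrt b) ^ 2 - / 4 * ((a - b) ^ 2 / (a + b)).

Lemma D_IDelta_rsum (n : nat) (P Q : nat -> R) :
  D_IDelta n P Q = rsum n (fun i => term_IDelta (P i) (Q i)).
Proof.
unfold D_IDelta, Idiv, Deltadiv.
induction n as [|n IH]; cbn [rsum]; [ring|].
rewrite <- IH. unfold term_IDelta. ring.
Qed.

Lemma D_hDelta_rsum (n : nat) (P Q : nat -> R) :
  D_hDelta n P Q = rsum n (fun i => term_hDelta (P i) (Q i)).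
Proof.
unfold D_hDelta, hdiv, Deltadiv.
induction n as [|n IH]; cbn [rsum]; [ring|].
rewrite <- IH. unfold term_hDelta. ring.
Qed.

Definition gap (u : R) : R :=
  2 / 3 * (1 - sqrt (1 - u ^ 2) - u ^ 2 / 2)
  - / 2 * ((1 + u) * ln (1 + u) + (1 - u) * ln (1 - u)) + u ^ 2 / 2.

Definition gap' (u : R) : R :=
  2 / 3 * (u / sqrt (1 - u ^ 2)) + u / 3 - / 2 * (ln (1 + u) - ln (1 - u)).

Definition gap'' (u : R) : R :=
  let s := sqrt (1 - u ^ 2) in (1 - s) ^ 2 * (s + 2) / (3 * s ^ 3).

Lemma is_derive_gap (u : R) : -1 < u < 1 -> is_derive gap u (gap' u).
Proof.
intros Hu. unfold gap, gap'. auto_derive;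
  replace (1 + - (u * (u * 1))) with (1 - u ^ 2) by ring.
- assert (0 < 1 - u ^ 2) by nra. repeat split; lra.
- replace (1 + - u) with (1 - u) by ring.
  assert (0 < sqrt (1 - u ^ 2)) by (apply sqrt_lt_R0; nra).
  field. repeat split; lra.
Qed.

Lemma is_derive_gap' (u : R) : -1 < u < 1 -> is_derive gap' u (gap'' u).
Proof.
intros Hu. unfold gap', gap''.
assert (Hs : 0 < sqrt (1 - u ^ 2)) by (apply sqrt_lt_R0; nra).
assert (Hs2 : u ^ 2 = 1 - sqrt (1 - u ^ 2) ^ 2) by (rewrite pow2_sqrt; nra).
set (s := sqrt (1 - u ^ 2)) in *.
auto_derive; replace (1 + - (u * (u * 1))) with (1 - u ^ 2) by ring; fold s.
- repeat split; try apply Rgt_not_eq; nra.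
- replace (1 + - u) with (1 - u) by ring.
  field_simplify; [|repeat split; lra..].
  replace (u ^ 4) with ((u ^ 2) ^ 2) by ring. rewrite Hs2.
  field. replace (-6 * s ^ 3 * (1 - s ^ 2) + 6 * s ^ 3) with (6 * s ^ 5) by ring.
  assert (0 < s ^ 5) by (apply pow_lt, Hs). split; lra.
Qed.

Lemma gap''_ge0 (u : R) : -1 < u < 1 -> 0 <= gap'' u.
Proof.
intros Hu. unfold gap''.
assert (Hs : 0 < sqrt (1 - u ^ 2)) by (apply sqrt_lt_R0; nra).
set (s := sqrt (1 - u ^ 2)) in *.
apply Rdiv_le_0_compat.
- apply Rmult_le_pos; [apply pow2_ge_0 | lra].
- apply Rmult_lt_0_compat; [lra | apply pow_lt, Hs].
Qed.

Lemma gap'0 : gap' 0 = 0.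
Proof.
unfold gap'. replace (1 - 0 ^ 2) with 1 by ring.
rewrite sqrt_1, Rplus_0_r, Rminus_0_r, ln_1. field.
Qed.

Lemma gap0 : gap 0 = 0.
Proof.
unfold gap. replace (1 - 0 ^ 2) with 1 by ring.
rewrite sqrt_1, Rplus_0_r, Rminus_0_r, ln_1. field.
Qed.

Lemma gap'_ge0 (u : R) : 0 <= u < 1 -> 0 <= gap' u.
Proof.
intros Hu. rewrite <- gap'0.
apply (le_of_deriv_ge0 gap' gap''); [lra | |];
  intros t Ht; [apply is_derive_gap' | apply gap''_ge0]; lra.
Qed.

Lemma gap_even (u : R) : gap (- u) = gap u.
Proof.
unfold gap.
replace (1 + - u) with (1 - u) by ring. replace (1 - - u) with (1 + u) by ring.
replace ((- u) ^ 2) with (u ^ 2) by ring. ring.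
Qed.

Lemma gap_ge0 (u : R) : -1 < u < 1 -> 0 <= gap u.
Proof.
assert (Hpos : forall v, 0 <= v < 1 -> 0 <= gap v).
{ intros v Hv. rewrite <- gap0.
  apply (le_of_deriv_ge0 gap gap'); [lra | |];
    intros t Ht; [apply is_derive_gap | apply gap'_ge0]; lra. }
intros Hu. destruct (Rle_dec 0 u).
- apply Hpos. lra.
- rewrite <- gap_even. apply Hpos. lra.
Qed.

Lemma term_gap (a b : R) : 0 < a -> 0 < b ->
  2 / 3 * term_hDelta a b - term_IDelta a b
  = (a + b) / 2 * gap ((a - b) / (a + b)).
Proof.
intros Ha Hb.
set (c := (a + b) / 2). set (u := (a - b) / (a + b)).
assert (Hsqrt : sqrt a * sqrt b = c * sqrt (1 - u ^ 2)).
{ assert (Hc : 0 < c) by (unfold c; lra).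
  assert (Hu2 : 1 - u ^ 2 = a * b / c ^ 2) by (unfold u, c; field; lra).
  assert (0 <= 1 - u ^ 2).
  { rewrite Hu2. apply Rdiv_le_0_compat; [nra | apply pow_lt, Hc]. }
  rewrite <- sqrt_mult, <- (sqrt_pow2 c), <- sqrt_mult by (try apply pow2_ge_0; lra).
  f_equal. rewrite Hu2. field. lra. }
assert (Hsq : (sqrt a - sqrt b) ^ 2 = a + b - 2 * (sqrt a * sqrt b)).
{ replace ((sqrt a - sqrt b) ^ 2)
    with (sqrt a * sqrt a + sqrt b * sqrt b - 2 * (sqrt a * sqrt b)) by ring.
  rewrite !sqrt_sqrt by lra. reflexivity. }
assert (Hlna : 2 * a / (a + b) = 1 + u) by (unfold u; field; lra).
assert (Hlnb : 2 * b / (a + b) = 1 - u) by (unfold u; field; lra).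
unfold term_hDelta, term_IDelta, gap.
rewrite Hsq, Hsqrt, Hlna, Hlnb.
unfold c, u. field. lra.
Qed.

Lemma term_IDelta_le (a b : R) : 0 < a -> 0 < b ->
  term_IDelta a b <= 2 / 3 * term_hDelta a b.
Proof.
intros Ha Hb.
assert (Hu : -1 < (a - b) / (a + b) < 1).
{ split; [apply Rlt_div_r | apply Rlt_div_l]; lra. }
assert (Hgap : 0 <= (a + b) / 2 * gap ((a - b) / (a + b))).
{ apply Rmult_le_pos; [lra | apply gap_ge0, Hu]. }
rewrite <- term_gap in Hgap by assumption. lra.
Qed.

Theorem proposition5p1 (n : nat) (P Q : nat -> R) :
  (2 <= n)%nat -> Gamma n P -> Gamma n Q ->
  D_IDelta n P Q <= 2 / 3 * D_hDelta n P Q.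
Proof.
intros _ [HP _] [HQ _].
rewrite D_IDelta_rsum, D_hDelta_rsum, <- rsum_scal.
apply rsum_le. intros i Hi.
apply term_IDelta_le; [apply HP | apply HQ]; exact Hi.
Qed.
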